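(* Let $A$ be a $K$-algebra and let $A[y_1;\sigma_1,d_1][y_2;\sigma_2,d_2]$ be an iterated Ore extension such that $\sigma_2(A)\subseteq A$ and $\sigma_2(y_1)=py_1+q$ for some $p\in K^*$ and $q\in A$. Then $\sigma_1\sigma_2(a)=\sigma_2\sigma_1(a)$ for all $a\in A$.
   Context: $K$ is a field, $K^*$ its group of units. For a $K$-algebra $R$, an algebra endomorphism $\sigma$ of $R$ and a $\sigma$-derivation $d$ of $R$ (a $K$-linear map with $d(ab)=\sigma(a)d(b)+d(a)b$), the Ore extension $R[x;\sigma,d]$ is the free left $R$-module with basis $\{x^i\}_{i\ge0}$ with associative multiplication extending that of $R$ and satisfying $xr=\sigma(r)x+d(r)$ for $r\in R$. An iterated Ore extension $A[y_1;\sigma_1,d_1][y_2;\sigma_2,d_2]$ is an Ore extension of $R=A[y_1;\sigma_1,d_1]$, where $\sigma_2,d_2$ are an endomorphism and a $\sigma_2$-derivation of $R$. *)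

From HB Require Import structures.
From mathcomp Require Import all_boot all_order all_algebra.
Set Implicit Arguments. Unset Strict Implicit. Unset Printing Implicit Defensive.
Import GRing.Theory.
Local Open Scope ring_scope.

Definition alg_hom (K : fieldType) (A B : algType K) (f : A -> B) : Prop :=
  [/\ forall a b, f (a + b) = f a + f b,
      forall (k : K) a, f (k *: a) = k *: f a,
      forall a b, f (a * b) = f a * f b
    & f 1 = 1].

Definition alg_endo (K : fieldType) (A : algType K) (sigma : A -> A) : Prop :=
  alg_hom sigma.

Definition sigma_derivation (K : fieldType) (A : algType K)
    (sigma d : A -> A) : Prop :=
  [/\ forall a b, d (a + b) = d a + d b,
      forall (k : K) a, d (k *: a) = k *: d a
    & forall a b, d (a * b) = sigma a * d b + d a * b].

(* S (together with the embedding iota : R -> S and the element x) is the Ore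
   extension R[x; sigma, d]: iota is an algebra homomorphism ("the
   multiplication extends that of R"), S is a free left R-module with basis
   {x^i}_{i >= 0} (every element is a finite R-combination of the x^i, and
   such combinations are unique), and x r = sigma(r) x + d(r). *)
Definition is_ore_ext (K : fieldType) (R S : algType K) (iota : R -> S)
    (x : S) (sigma d : R -> R) : Prop :=
  [/\ alg_hom iota,
      forall s : S, exists (n : nat) (c : nat -> R),
          s = \sum_(i < n) iota (c i) * x ^+ i,
      forall (n : nat) (c : nat -> R),
          \sum_(i < n) iota (c i) * x ^+ i = 0 -> forall i, (i < n)%N -> c i = 0
    & forall r : R, x * iota r = iota (sigma r) * x + iota (d r)].

From HB Require Import structures.
From mathcomp Require Import all_boot all_order all_algebra.
Set Implicit Arguments. Unset Strict Implicit. Unset Printing Implicit Defensive.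
Import GRing.Theory.
Local Open Scope ring_scope.

(* Apply sigma2 to both sides of the commutation rule [y1 a = sigma1(a) y1 + d1(a)]:
   since sigma2 preserves A and sends y1 to p y1 + q, both sides become
   polynomials of degree at most one in y1 over A, and comparing their
   y1-coefficients gives p sigma1(sigma2 a) = p sigma2(sigma1 a). *)

Lemma alg_homB (K : fieldType) (A B : algType K) (f : A -> B) :
  alg_hom f -> forall a b, f (a - b) = f a - f b.
Proof.
by case=> fD _ _ _ a b; rewrite -[in f a](subrK b a) (fD (a - b)) addrK.
Qed.

Lemma ore_ext_coef1_inj (K : fieldType) (R S : algType K) (iota : R -> S)
    (x : S) (sigma d : R -> R) (r0 r1 s0 s1 : R) :
  is_ore_ext iota x sigma d ->
  iota r0 + iota r1 * x = iota s0 + iota s1 * x -> r1 = s1.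
Proof.
case=> iota_hom _ coef_uniq _ eq_rs.
pose c i := if i == 0%N then r0 - s0 else r1 - s1.
have c_sum0 : \sum_(i < 2) iota (c i) * x ^+ i = 0.
  rewrite !big_ord_recr big_ord0 /= add0r expr0 expr1 mulr1 /c /=.
  by rewrite !alg_homB // mulrBl addrACA -opprD eq_rs subrr.
by have /eqP := coef_uniq 2%N c c_sum0 1%N isT; rewrite subr_eq0 => /eqP.
Qed.

Section OreExtensionEndomorphism.

Variables (K : fieldType) (A R : algType K).
Variables (sigma1 d1 : A -> A) (iota1 : A -> R) (y1 : R) (sigma2 : R -> R).
Hypothesis hR : is_ore_ext iota1 y1 sigma1 d1.
Hypothesis hs2 : alg_endo sigma2.
Variables (p : K) (q : A).
Hypothesis hp : p != 0.
Hypothesis hy1 : sigma2 y1 = p *: y1 + iota1 q.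

Lemma sigma1_sigma2_comm (a a' b c : A) :
  sigma2 (iota1 a) = iota1 a' ->
  sigma2 (iota1 (sigma1 a)) = iota1 b ->
  sigma2 (iota1 (d1 a)) = iota1 c ->
  sigma1 a' = b.
Proof.
move=> ha hb hc.
have [[iD iZ iM _] _ _ y1_comm] := hR.
have [s2D _ s2M _] := hs2.
have via_y1_left : sigma2 (y1 * iota1 a) =
    iota1 (p *: d1 a' + q * a') + iota1 (p *: sigma1 a') * y1.
  by rewrite s2M hy1 ha mulrDl -scalerAl y1_comm scalerDr iD !iZ iM
    scalerAl -addrA addrC.
have via_y1_right : sigma2 (y1 * iota1 a) =
    iota1 (b * q + c) + iota1 (p *: b) * y1.
  by rewrite y1_comm s2D s2M hb hc hy1 mulrDr -scalerAr iZ scalerAl iD iM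
    -addrA addrC.
have := ore_ext_coef1_inj hR (etrans (esym via_y1_left) via_y1_right).
exact: scalerI.
Qed.

End OreExtensionEndomorphism.

Theorem lemma2p1 (K : fieldType) (A R S : algType K)
    (sigma1 d1 : A -> A) (iota1 : A -> R) (y1 : R)
    (sigma2 d2 : R -> R) (iota2 : R -> S) (y2 : S)
    (hs1 : alg_endo sigma1) (hd1 : sigma_derivation sigma1 d1)
    (hR : is_ore_ext iota1 y1 sigma1 d1)
    (hs2 : alg_endo sigma2) (hd2 : sigma_derivation sigma2 d2)
    (hS : is_ore_ext iota2 y2 sigma2 d2)
    (hA : forall a : A, exists a' : A, sigma2 (iota1 a) = iota1 a')
    (p : K) (q : A) (hp : p != 0)
    (hy1 : sigma2 y1 = p *: y1 + iota1 q) :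
  forall a a' : A, sigma2 (iota1 a) = iota1 a' ->
    iota1 (sigma1 a') = sigma2 (iota1 (sigma1 a)).
Proof.
move=> a a' ha.
have [b hb] := hA (sigma1 a).
have [c hc] := hA (d1 a).
by rewrite hb (sigma1_sigma2_comm hR hs2 hp hy1 ha hb hc).
Qed.
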